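(* Let $\mathcal{M}$ be a set of $m$ items with $m$ even, and let $v_1,v_2:2^{\mathcal{M}}\to\mathbb{R}$ be arbitrary valuation functions for $n=2$ agents. Let $\sigma_1,\sigma_2$ be independent uniformly random permutations of $\mathcal{M}$. Then, with probability at least $1-\frac{1}{m/2+1}$, an envy-free allocation exists for the renamed valuations $v_1^{\sigma_1},v_2^{\sigma_2}$. Moreover, this is tight up to constants: there exist additive valuation functions $v_1,v_2$ (for every $m\ge 2$) for which, with probability $1/m$, no envy-free allocation exists for $v_1^{\sigma_1},v_2^{\sigma_2}$.
   Context: For a valuation $v$ and a permutation $\sigma:\mathcal{M}\to\mathcal{M}$, the renamed valuation is $v^{\sigma}(S)=v(\sigma^{-1}(S))$, where $\sigma(S)=\{\sigma(g):g\in S\}$. An allocation is a partition $(A_1,A_2)$ of all items of $\mathcal{M}$; it is envy-free if each agent weakly prefers her own bundle to the other agent's bundle. A valuation $v$ is additive if $v(S)=\sum_{g\in S}v(\{g\})$ for all $S$. *)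

From HB Require Import structures.
From mathcomp Require Import all_boot all_order all_algebra all_fingroup.
From mathcomp Require Import reals.
Set Implicit Arguments. Unset Strict Implicit. Unset Printing Implicit Defensive.
Import Order.TTheory GRing.Theory Num.Theory.
Local Open Scope ring_scope.

Definition valuation (R : realType) (m : nat) := {set 'I_m} -> R.

Definition rename (R : realType) (m : nat) (v : valuation R m)
  (s : {perm 'I_m}) : valuation R m :=
  fun S => v [set (s^-1)%g x | x in S].

Definition envy_free (R : realType) (m : nat) (v1 v2 : valuation R m)
  (A1 A2 : {set 'I_m}) : bool :=
  (v1 A2 <= v1 A1) && (v2 A1 <= v2 A2).

Definition is_partition2 (m : nat) (A1 A2 : {set 'I_m}) : bool :=
  (A1 :&: A2 == set0) && (A1 :|: A2 == setT).

Definition EF_exists (R : realType) (m : nat) (v1 v2 : valuation R m) : bool :=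
  [exists A1 : {set 'I_m}, exists A2 : {set 'I_m},
     is_partition2 A1 A2 && envy_free v1 v2 A1 A2].

Definition additive_val (R : realType) (m : nat) (v : valuation R m) : Prop :=
  forall S : {set 'I_m}, v S = \sum_(g in S) v [set g].

Definition uprob (R : realType) (T : finType) (E : pred T) : R :=
  #|[set x | E x]|%:R / #|T|%:R.

(* sigma1, sigma2 independent uniform permutations = uniform on the pair. *)
Definition prob_EF (R : realType) (m : nat) (v1 v2 : valuation R m) : R :=
  uprob R (fun p : {perm 'I_m} * {perm 'I_m} =>
             EF_exists (rename v1 p.1) (rename v2 p.2)).

(* An allocation gives a bundle A to agent 1 and its complement to agent 2, so
   envy-freeness only involves [prefers v A]: "v weakly prefers A to its
   complement" (EF_existsE).  Fix s1.  If no envy-free allocation exists for two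
   renamings a, b of agent 2, then agent 2 is never indifferent and, read through
   a or through b, ranks every bundle against its complement like agent 1; hence
   b a^-1 preserves agent 2's preferences.  So the bad renamings lie in one coset
   of the group G of such permutations, and G contains no permutation exchanging
   a set with its complement.  For m = 2k every such swap-free subgroup of S_m
   has index at least k+1 (swap_free_index): for k <= 2 the rotations by
   0, ..., k lie in pairwise distinct cosets; for k >= 3 a smaller index would
   force the simple group Alt_m into G, yet Alt_m contains a swapping
   permutation.  Summing over s1 gives the first claim.

   Tightness: if both agents value only one item g, an envy-free allocation
   exists iff s1 and s2 give g different names, which fails with probability
   exactly 1/m. *)

From HB Require Import structures.
From mathcomp Require Import all_boot all_order all_algebra all_fingroup.
From mathcomp Require Import reals.
From mathcomp Require Import all_solvable zify ring.
Import Order.TTheory GRing.Theory Num.Theory.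
Set Implicit Arguments. Unset Strict Implicit. Unset Printing Implicit Defensive.

Section CoreFreeAction.
Local Open Scope group_scope.

(* A group acting faithfully on the [n] cosets of a core-free subgroup
   embeds in the symmetric group on them, hence has order at most [n!]. *)
Lemma card_le_fact_index (gT : finGroupType) (H A : {group gT}) :
  gcore H A = 1 -> (#|A| <= #|A : H|`!)%N.
Proof.
move=> core1.
have nSA : actby_cond A (rcosets H A) 'Rs := actsRs_rcosets H A.
have faith : [faithful A, on rcosets H A | 'Rs].
  by rewrite /faithful astabRs_rcosets core1 subsetIr.
rewrite (isom_card (faithful_isom nSA faith)) -card_perm.
apply: subset_leq_card; apply/subsetP => _ /morphimP[a _ Aa ->].
apply/subsetP => x; rewrite inE actpermE /= /actby Aa andbT.
by case: (x \in rcosets H A); rewrite ?eqxx.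
Qed.

End CoreFreeAction.

Section SwappingPermutations.
Local Open Scope group_scope.
Variable m : nat.
Implicit Types (p q a : {perm 'I_m}) (A C : {set 'I_m}).

Lemma mem_imset_perm p A x : (x \in p @: A) = (p^-1 x \in A).
Proof.
apply/imsetP/idP => [[y yA ->]|h]; first by rewrite permK.
by exists (p^-1 x) => //; rewrite permKV.
Qed.

Lemma imset_permC p A : p @: (~: A) = ~: (p @: A).
Proof. by apply/setP => x; rewrite !inE !mem_imset_perm inE. Qed.

Lemma imset_permM p q A : (p * q) @: A = q @: (p @: A).
Proof. by rewrite -imset_comp; apply: eq_imset => x; rewrite permM. Qed.

Lemma imset_perm1 A : (1 : {perm 'I_m}) @: A = A.
Proof. by rewrite -[RHS]imset_id; apply: eq_imset => x; rewrite perm1. Qed.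

Lemma imset_permK p A : p^-1 @: (p @: A) = A.
Proof. by rewrite -imset_permM mulgV imset_perm1. Qed.

Definition swaps a C : Prop := a @: C = ~: C.

Definition swap_free (G : {set {perm 'I_m}}) : Prop :=
  forall a C, a \in G -> ~ swaps a C.

Lemma swapsP a C :
  (forall i, i \in C -> a i \notin C) -> (forall i, i \notin C -> a i \in C) ->
  swaps a C.
Proof.
move=> inC outC; apply/setP=> j; rewrite inE; apply/imsetP/idP.
  by case=> i iC ->; exact: inC.
move=> jC; exists (a^-1 j); last by rewrite permKV.
by apply: contraR jC => /outC; rewrite permKV.
Qed.

Lemma swaps_mem a C i : swaps a C -> (a i \in C) = (i \notin C).
Proof.
move=> sw; rewrite -(setCK C) -{1}sw -imset_permC.
by rewrite mem_imset_perm permK !inE negbK.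
Qed.

(* Composing with a transposition inside [C] preserves swapping; this lets us
   flip the parity of a swapping permutation. *)
Lemma swaps_tperm a C c1 c2 :
  swaps a C -> c1 \in C -> c2 \in C -> swaps (a * tperm c1 c2) C.
Proof.
move=> sw c1C c2C; apply: swapsP => i iC; rewrite permM.
  have aiC : a i \notin C by rewrite swaps_mem // iC.
  by case: tpermP => [e|e|_ _] //; rewrite e ?c1C ?c2C in aiC.
have aiC : a i \in C by rewrite swaps_mem.
by case: tpermP.
Qed.

Definition rotf (d : nat) (i : 'I_m) : 'I_m :=
  Ordinal (ltn_pmod (i + d) (leq_ltn_trans (leq0n i) (ltn_ord i))).

Lemma rotf_inj d : injective (rotf d).
Proof.
move=> i j /(congr1 val) /= /eqP; rewrite eqn_modDr !modn_small //.
by move/eqP/val_inj.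
Qed.

Definition rot d : {perm 'I_m} := perm (@rotf_inj d).

Lemma rotE d i : val (rot d i) = ((i + d) %% m)%N.
Proof. by rewrite permE. Qed.

Lemma rotM c d : rot c * rot d = rot (c + d).
Proof.
by apply/permP=> i; apply/val_inj; rewrite permM !rotE modnDml addnA.
Qed.

Lemma swaps_rot_half k : m = k.*2 -> swaps (rot k) [set i : 'I_m | (i < k)%N].
Proof.
move=> hm; apply: swapsP => i; rewrite !inE rotE;
  have := ltn_ord i; move: (nat_of_ord i) => n nm.
  move=> nk; rewrite modn_small; first by rewrite -leqNgt leq_addl.
  by move: nk nm; rewrite hm; lia.
rewrite -leqNgt => kn.
have -> : (n + k = (n - k) + m)%N by move: kn nm; rewrite hm; lia.
by rewrite modnDr modn_small; move: kn nm; rewrite hm; lia.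
Qed.

Lemma swaps_rot_odd d : ~~ odd m -> odd d ->
  swaps (rot d) [set i : 'I_m | ~~ odd i].
Proof.
move=> em od; apply: swapsP => i;
  by rewrite !inE rotE odd_mod ?(negbTE em) // oddD od; case: odd.
Qed.

(* For [m = 2k] with [k >= 2], the alternating group contains a swapping
   permutation (the half rotation, corrected by a transposition if odd). *)
Lemma Alt_swaps k : m = k.*2 -> (2 <= k)%N ->
  exists2 a, a \in 'Alt_('I_m) & exists C, swaps a C.
Proof.
move=> hm k2; set C := [set i : 'I_m | (i < k)%N].
have m0 : (0 < m)%N by rewrite hm; lia.
have m1 : (1 < m)%N by rewrite hm; lia.
have c0C : Ordinal m0 \in C by rewrite inE /=; lia.
have c1C : Ordinal m1 \in C by rewrite inE /=; lia.
have swk := swaps_rot_half hm.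
case o: (odd_perm (rot k)).
  exists (rot k * tperm (Ordinal m0) (Ordinal m1)); last first.
    by exists C; apply: swaps_tperm.
  by rewrite Alt_even odd_permM odd_tperm o.
by exists (rot k); [rewrite Alt_even o | exists C].
Qed.

(* If [n] permutations have pairwise swapping quotients, they lie in distinct
   cosets of any swap-free group [G], so [G] has index at least [n]. *)
Lemma swap_free_clique (G : {group {perm 'I_m}}) n (rho : 'I_n -> {perm 'I_m}) :
  (forall i j : 'I_n, (i < j)%N -> exists C, swaps (rho j * (rho i)^-1) C) ->
  swap_free G -> (#|G| * n <= m`!)%N.
Proof.
move=> hrho freeG.
have -> : (#|G| * n = #|setX G [set: 'I_n]|)%N by rewrite cardsX cardsT card_ord.
rewrite -card_Sn -(@card_in_imset _ _ (fun x => x.1 * rho x.2)); first exact: max_card.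
have distinct g h (i j : 'I_n) : g \in G -> h \in G -> (i < j)%N ->
    g * rho i != h * rho j.
  move=> Gg Gh ij; apply/eqP => e.
  have quot : rho j * (rho i)^-1 = h^-1 * g.
    by rewrite -[g](mulgK (rho i)) e !mulgA mulVg mul1g.
  have [C swC] := hrho i j ij.
  by apply: (freeG _ C (groupM (groupVr Gh) Gg)); rewrite -quot.
move=> [g i] [h j] /setXP[Gg _] /setXP[Gh _] /= e.
case: (ltngtP i j) => [ij|ji|/val_inj eij].
- by have := distinct g h i j Gg Gh ij; rewrite e eqxx.
- by have := distinct h g j i Gh Gg ji; rewrite e eqxx.
- by subst j; move/mulIg: e => ->.
Qed.

(* Small case of the index bound: rotations by [0, ..., k] form a clique. *)
Lemma swap_free_index_small k (G : {group {perm 'I_m}}) :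
  m = k.*2 -> (k <= 2)%N -> swap_free G -> (#|G| * k.+1 <= m`!)%N.
Proof.
move=> hm k2; apply: (swap_free_clique (rho := fun i : 'I_k.+1 => rot i)).
move=> i j ij.
have -> : rot j * (rot i)^-1 = rot (j - i).
  by rewrite -[in rot j](subnK (ltnW ij)) -rotM mulgK.
have jk : (j < k.+1)%N := ltn_ord j.
case: (eqVneq (j - i)%N 1%N) => [->|ne1].
  by exists [set i : 'I_m | ~~ odd i]; apply: swaps_rot_odd; rewrite // hm odd_double.
have [-> k2e] : (j - i = 2)%N /\ k = 2 by lia.
by exists [set x : 'I_m | (x < 2)%N]; apply: swaps_rot_half; rewrite hm k2e.
Qed.

(* Large case: if [G] had index at most [k], then [G :&: Alt] would have
   index at most [k] in the simple group [Alt_m]; its core is then trivial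
   (impossible as [|Alt_m| > k!]) or all of [Alt_m], which contains a
   swapping permutation. *)
Lemma swap_free_index_large k (G : {group {perm 'I_m}}) :
  m = k.*2 -> (3 <= k)%N -> swap_free G -> (#|G| * k.+1 <= m`!)%N.
Proof.
move=> hm k3 freeG; apply: contraT; rewrite -ltnNge => bigG.
have cardA : (2 * #|'Alt_('I_m)| = m`!)%N.
  by rewrite card_Alt card_ord // hm; lia.
set A := ('Alt_('I_m))%G in cardA *; set H := (G :&: A)%G.
have idxH : (#|A : H| <= k)%N.
  have AG : (#|A| * #|G| <= m`! * #|H|)%N.
    by rewrite mul_cardG setIC leq_mul2r -card_Sn max_card orbT.
  have : (#|A : H| * #|G| <= m`!)%N.
    by move: AG; rewrite -(Lagrange (subsetIr G A)) -mulnA [(m`! * _)%N]mulnC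
      leq_pmul2l // cardG_gt0.
  by move/leq_ltn_trans/(_ bigG); rewrite mulnC ltn_pmul2l ?cardG_gt0.
have /simpleP[_ simpleA] : simple A by apply: simple_Alt5; rewrite card_ord hm; lia.
case: (simpleA [group of gcore H A] (gcore_normal (subsetIr G A))) => [core1|coreA].
  have smallA := leq_trans (card_le_fact_index core1) (leq_fact idxH).
  have : ((k.+2)`! <= m`!)%N by apply: leq_fact; lia.
  rewrite -cardA !factS mulnA => /leq_trans/(_ (leq_mul (leqnn 2) smallA)).
  by rewrite leq_pmul2r ?fact_gt0 //; lia.
have AG : A \subset G by rewrite -coreA (subset_trans (gcore_sub H A)) ?subsetIl.
have [a Aa [C swC]] := Alt_swaps hm (ltnW k3).
by case: (freeG a C (subsetP AG a Aa) swC).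
Qed.

Lemma swap_free_index k (G : {group {perm 'I_m}}) :
  m = k.*2 -> swap_free G -> (#|G| * k.+1 <= m`!)%N.
Proof.
by case: (leqP k 2) => hk hm; [apply: swap_free_index_small | apply: swap_free_index_large].
Qed.

End SwappingPermutations.

Local Open Scope ring_scope.

Section EnvyFreeness.
Variables (R : realType) (m : nat).
Implicit Types (v : valuation R m) (s a b : {perm 'I_m}) (A X : {set 'I_m}).

Definition prefers v A : bool := v (~: A) <= v A.

Lemma prefers_total v A : prefers v A || prefers v (~: A).
Proof. by rewrite /prefers setCK le_total. Qed.

Definition strict_pref v : Prop := forall X, ~~ (prefers v X && prefers v (~: X)).

Lemma partition2_compl A1 A2 : is_partition2 A1 A2 -> A2 = ~: A1.
Proof.
case/andP => /eqP/setP disj /eqP/setP cover; apply/setP => x.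
by move: (disj x) (cover x); rewrite !inE; case: (x \in A1); case: (x \in A2).
Qed.

Lemma EF_existsE v1 v2 s1 s2 :
  EF_exists (rename v1 s1) (rename v2 s2) =
  [exists A : {set 'I_m}, prefers v1 (s1^-1%g @: A) && prefers v2 (s2^-1%g @: (~: A))].
Proof.
apply/existsP/existsP => [[A1 /existsP[A2 /andP[part ef]]]|[A ef]].
  exists A1; move: ef; rewrite (partition2_compl part) /prefers.
  by rewrite -!imset_permC setCK.
exists A; apply/existsP; exists (~: A); rewrite /is_partition2 setICr setUCr !eqxx.
by move: ef; rewrite /prefers -!imset_permC setCK.
Qed.

Definition pref_stab v : {set {perm 'I_m}} :=
  [set p : {perm 'I_m} | [forall X : {set 'I_m}, prefers v (p @: X) == prefers v X]].

Lemma pref_stab_group_set v : group_set (pref_stab v).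
Proof.
apply/group_setP; split; first by rewrite inE; apply/forallP => X; rewrite imset_perm1.
move=> p q; rewrite !inE => /forallP stab_p /forallP stab_q; apply/forallP => X.
by rewrite imset_permM (eqP (stab_q _)) (eqP (stab_p _)).
Qed.

Canonical pref_stab_group v := Group (pref_stab_group_set v).

(* A swapping renaming would make a strict valuation prefer both a bundle
   and its complement. *)
Lemma pref_stab_swap_free v : strict_pref v -> swap_free (pref_stab v).
Proof.
move=> strict p C; rewrite inE => /forallP stab_p swC.
have := eqP (stab_p C); rewrite swC => prefC.
by have := strict C; have := prefers_total v C; rewrite prefC; case: prefers.
Qed.

Section NoEnvyFreeAllocation.
Variables (v1 v2 : valuation R m) (s1 : {perm 'I_m}).

Definition no_EF s : bool := ~~ EF_exists (rename v1 s1) (rename v2 s).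

Lemma no_EF_agree s : no_EF s ->
  forall A, prefers v2 (s^-1%g @: A) = prefers v1 (s1^-1%g @: A).
Proof.
rewrite /no_EF EF_existsE negb_exists => /forallP noEF A.
case pref1: (prefers v1 (s1^-1%g @: A)).
  have := noEF A; rewrite pref1 /= => /negbTE npref2.
  by have := prefers_total v2 (s^-1%g @: A); rewrite -imset_permC npref2 orbF.
have := prefers_total v1 (s1^-1%g @: A); rewrite pref1 /= -imset_permC => pref1C.
by have := noEF (~: A); rewrite pref1C setCK => /negbTE.
Qed.

Lemma no_EF_strict s : no_EF s -> strict_pref v2.
Proof.
move=> bad X; apply/negP => /andP[prefX prefXC].
have := bad; rewrite /no_EF EF_existsE => /existsPn/(_ (s @: X)).
by rewrite -(no_EF_agree bad) -imset_permC !imset_permK prefX prefXC.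
Qed.

Lemma no_EF_coset a b : no_EF a -> no_EF b -> (b * a^-1)%g \in pref_stab v2.
Proof.
move=> bad_a bad_b; rewrite inE; apply/forallP => X; apply/eqP.
by rewrite imset_permM (no_EF_agree bad_a) -(no_EF_agree bad_b) imset_permK.
Qed.

Lemma card_no_EF k : m = k.*2 -> (#|[set s | no_EF s]| * k.+1 <= m`!)%N.
Proof.
move=> hm; have [-> | [a]] := set_0Vmem [set s | no_EF s]; first by rewrite cards0.
rewrite inE => bad_a.
have free := pref_stab_swap_free (no_EF_strict bad_a).
apply: leq_trans (swap_free_index hm free); rewrite leq_mul2r.
rewrite -(card_imset [set s | no_EF s] (mulIg a^-1%g)) subset_leq_card ?orbT //.
by apply/subsetP => x /imsetP[b]; rewrite inE => bad_b ->; apply: no_EF_coset.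
Qed.

End NoEnvyFreeAllocation.

End EnvyFreeness.

Lemma card_perm_pairs m : #|{: {perm 'I_m} * {perm 'I_m}}| = (m`! * m`!)%N.
Proof. by rewrite card_prod card_Sn. Qed.

Lemma card_pairs (T1 T2 : finType) (P : pred (T1 * T2)) :
  #|[set x | P x]| = (\sum_(a : T1) #|[set b | P (a, b)]|)%N.
Proof.
rewrite -sum1dep_card; under [RHS]eq_bigr do rewrite -sum1dep_card.
by rewrite pair_big_dep /=; apply: eq_bigl => -[a b].
Qed.

Lemma uprob_compl (R : realType) (T : finType) (E : pred T) : (0 < #|T|)%N ->
  1 - uprob R E = uprob R (fun x => ~~ E x).
Proof.
move=> T0; have split : (#|[set x | E x]| + #|[set x | ~~ E x]| = #|T|)%N.
  by rewrite -(cardsC [set x | E x]); congr (_ + _)%N; apply: eq_card => x; rewrite !inE.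
rewrite /uprob -split natrD; field.
by rewrite -natrD split pnatr_eq0 -lt0n.
Qed.

Lemma card_perm_maps m (i j : 'I_m) :
  #|[set s : {perm 'I_m} | s i == j]| = #|[set s : {perm 'I_m} | s i == i]|.
Proof.
have -> : [set s : {perm 'I_m} | s i == j] =
    (fun s => s * tperm i j)%g @: [set s : {perm 'I_m} | s i == i].
  apply/setP => s; rewrite inE; apply/eqP/imsetP => [sij|[t]].
    exists (s * tperm i j)%g; last by rewrite -mulgA tperm2 mulg1.
    by rewrite inE permM sij tpermR.
  by rewrite inE => /eqP tii ->; rewrite permM tii tpermL.
exact/card_imset/mulIg.
Qed.

Lemma card_perm_fix m (i : 'I_m) :
  (m * #|[set s : {perm 'I_m} | s i == i]| = m`!)%N.
Proof.
rewrite -[m in (m * _)%N]card_ord -sum_nat_const -card_Sn -[#|{perm 'I_m}|]sum1_card.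
rewrite (partition_big (fun s : {perm 'I_m} => s i) predT) //=.
by apply: eq_bigr => j _; rewrite -(card_perm_maps i j) -sum1dep_card.
Qed.

Lemma prob_EF_lower_bound (R : realType) m (v1 v2 : valuation R m) :
  ~~ odd m -> 1 - 1 / ((m %/ 2)%N.+1)%:R <= prob_EF v1 v2.
Proof.
move=> even_m; set k := (m %/ 2)%N.
have hm : m = k.*2 by rewrite /k divn2 even_halfK.
have pairs_gt0 : (0 < #|{: {perm 'I_m} * {perm 'I_m}}|)%N.
  by rewrite card_perm_pairs muln_gt0 fact_gt0.
set EF := fun p : {perm 'I_m} * {perm 'I_m} => EF_exists (rename v1 p.1) (rename v2 p.2).
have card_bad : (#|[set p | ~~ EF p]| * k.+1 <= #|{: {perm 'I_m} * {perm 'I_m}}|)%N.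
  rewrite card_pairs big_distrl card_perm_pairs -[X in (_ <= X * _)%N]card_Sn.
  by rewrite -sum_nat_const leq_sum // => s1 _; apply: card_no_EF.
have bad_small : uprob R (fun p => ~~ EF p) <= 1 / (k.+1)%:R.
  rewrite /uprob ler_pdivrMr ?ltr0n // mul1r mulrC ler_pdivlMr ?ltr0n //.
  by rewrite -natrM ler_nat.
by rewrite /prob_EF -/EF lerBlDr -lerBlDl uprob_compl.
Qed.

Definition unit_val (R : realType) m (g : 'I_m) : valuation R m :=
  fun S => (g \in S)%:R.

Section SingleValuableItem.
Variables (R : realType) (m : nat) (g : 'I_m).

Lemma unit_val_additive : additive_val (unit_val R g).
Proof.
move=> S; rewrite /unit_val; case gS: (g \in S).
  rewrite (bigD1 g) //= in_set1 eqxx big1 ?addr0 // => h /andP[_ ne].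
  by rewrite in_set1 eq_sym (negbTE ne).
rewrite big1 // => h hS; rewrite in_set1; case: eqP => // e.
by rewrite e hS in gS.
Qed.

Lemma prefers_unit_val X : prefers (unit_val R g) X = (g \in X).
Proof. by rewrite /prefers /unit_val inE; case: (g \in X); rewrite ?ler01 ?ler10. Qed.

Lemma EF_unit_val s1 s2 :
  EF_exists (rename (unit_val R g) s1) (rename (unit_val R g) s2) = (s1 g != s2 g).
Proof.
rewrite EF_existsE; apply/existsP/idP => [[A]|ne].
  rewrite !prefers_unit_val !mem_imset_perm !invgK inE => /andP[g1 g2].
  by apply: contraNneq g2 => <-.
exists [set s1 g]; rewrite !prefers_unit_val !mem_imset_perm !invgK !inE eqxx /=.
by rewrite eq_sym.
Qed.

Lemma prob_no_EF_unit_val : (0 < m)%N ->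
  1 - prob_EF (unit_val R g) (unit_val R g) = 1 / m%:R.
Proof.
move=> m0; set c := #|[set s : {perm 'I_m} | s g == g]|.
have fix_c : (m * c = m`!)%N := card_perm_fix g.
have pairs_gt0 : (0 < #|{: {perm 'I_m} * {perm 'I_m}}|)%N.
  by rewrite card_perm_pairs muln_gt0 fact_gt0.
rewrite /prob_EF uprob_compl // /uprob.
have -> : #|[set p : {perm 'I_m} * {perm 'I_m} |
    ~~ EF_exists (rename (unit_val R g) p.1) (rename (unit_val R g) p.2)]| = (m`! * c)%N.
  rewrite card_pairs -card_Sn -sum_nat_const; apply: eq_bigr => s1 _.
  rewrite /c -(card_perm_maps g (s1 g)); apply: eq_card => s2.
  by rewrite !inE EF_unit_val negbK eq_sym.
have c_neq0 : c%:R != 0 :> R by rewrite pnatr_eq0 -lt0n; move: fix_c (fact_gt0 m); lia.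
have m_neq0 : m%:R != 0 :> R by rewrite pnatr_eq0 -lt0n.
by rewrite card_perm_pairs -fix_c !natrM; field; rewrite m_neq0 c_neq0.
Qed.

End SingleValuableItem.

Theorem theorem3p5 (R : realType) :
  (forall (m : nat), ~~ odd m ->
     forall v1 v2 : valuation R m,
       1 - 1 / ((m %/ 2)%N.+1)%:R <= prob_EF v1 v2) /\
  (forall (m : nat), (2 <= m)%N ->
     exists v1 v2 : valuation R m,
       [/\ additive_val v1, additive_val v2 & 1 - prob_EF v1 v2 = 1 / m%:R]).
Proof.
split=> [m even_m v1 v2 | m m2]; first exact: prob_EF_lower_bound.
have m0 : (0 < m)%N by apply: leq_trans m2.
pose g : 'I_m := Ordinal m0.
exists (unit_val R g), (unit_val R g).
by split; [exact: unit_val_additive | exact: unit_val_additive | exact: prob_no_EF_unit_val].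
Qed.
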